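(* Let $(X,d,\kappa)$ be a digital metric space of positive, finite diameter, where $d$ is any $\ell_p$ metric. Let $f: X \to X$ be a function and let $a,b,c \in \left(0, \frac{1}{3\,\mathrm{diam}\, X}\right)$ be such that $d(f(x),f(y)) \le a\,d(x,f(x)) + b\,d(y,f(y)) + c\,d(x,y)$ for all $x,y \in X$ (i.e., $f$ is a Reich contraction map with these constants). Then $f$ is a constant function.
   Context: A digital metric space is a triple $(X,d,\kappa)$ with $X\subset\mathbb{Z}^n$, $\kappa$ an adjacency relation on $X$, and $d$ a metric on $X$. The $\ell_p$ metric ($1\le p\le\infty$) is $d(x,y) = (\sum_i |x_i-y_i|^p)^{1/p}$ for $p<\infty$ and $\max_i|x_i-y_i|$ for $p=\infty$. $\mathrm{diam}\, X = \max\{d(x,y) : x,y\in X\}$. *)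

From HB Require Import structures.
From mathcomp Require Import all_boot all_order all_algebra.
From mathcomp Require Import all_classical all_reals all_analysis.
Set Implicit Arguments. Unset Strict Implicit. Unset Printing Implicit Defensive.
Import Order.TTheory GRing.Theory Num.Theory.
Local Open Scope ring_scope.
Local Open Scope classical_set_scope.

Definition zpoint (n : nat) := 'I_n -> int.

(* Index p of an l_p metric: finite p (with 1 <= p required separately) or infinity. *)
Inductive lp_index (R : realType) := Lp of R | Linf.
Arguments Linf {R}.

Definition lp_valid (R : realType) (p : lp_index R) : Prop :=
  match p with Lp q => 1 <= q | Linf => True end.

Definition lp_dist (R : realType) (n : nat) (p : lp_index R)
  (x y : zpoint n) : R :=
  match p with
  | Lp q => (\sum_(i < n) `|((x i - y i)%:~R : R)| `^ q) `^ q^-1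
  | Linf => \big[Num.max/0]_(i < n) `|((x i - y i)%:~R : R)|
  end.

Definition diam (R : realType) (n : nat) (d : zpoint n -> zpoint n -> R)
  (X : set (zpoint n)) : R :=
  sup [set d x y | x in X & y in X].

Definition finite_diam (R : realType) (n : nat) (d : zpoint n -> zpoint n -> R)
  (X : set (zpoint n)) : Prop :=
  has_ubound [set d x y | x in X & y in X].

From HB Require Import structures.
From mathcomp Require Import all_boot all_order all_algebra.
From mathcomp Require Import all_classical all_reals all_analysis.
From mathcomp Require Import ring lra.

Set Implicit Arguments.
Unset Strict Implicit.
Unset Printing Implicit Defensive.
Import Order.TTheory GRing.Theory Num.Theory.
Local Open Scope ring_scope.
Local Open Scope classical_set_scope.

(* Distinct points of Z^n are at l_p distance at least 1, whereas the Reich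
   inequality bounds d(f x, f y) by (a + b + c) diam X < 1 on X. *)

Lemma powR_ge1 (R : realType) (x r : R) : 1 <= x -> 0 <= r -> 1 <= x `^ r.
Proof. by move=> x_ge1 r_ge0; rewrite -(powRr0 x) ler_powR. Qed.

Lemma lp_dist_ge1 (R : realType) (n : nat) (p : lp_index R) (u v : zpoint n) :
  lp_valid p -> u <> v -> 1 <= lp_dist p u v.
Proof.
move=> p_valid u_neq_v.
have [i uv_i] : exists i, u i != v i.
  apply: contrapT => same_coords; apply/u_neq_v/boolp.funext => i.
  by apply/eqP/negbNE/negP => uv_i; apply: same_coords; exists i.
have coord_ge1 : 1 <= `|((u i - v i)%:~R : R)|.
  by rewrite -intr_norm ler1z -gtz0_ge1 normr_gt0 subr_eq0.
case: p p_valid => [q|] /= q_ge1; rewrite (bigD1 i) //=; last by rewrite le_max coord_ge1.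
have q_ge0 : 0 <= q := le_trans ler01 q_ge1.
apply: powR_ge1; last by rewrite invr_ge0.
rewrite -[X in X <= _]addr0 lerD ?powR_ge1 //.
by apply: sumr_ge0 => j _; exact: powR_ge0.
Qed.

Lemma dist_le_diam (R : realType) (n : nat) (d : zpoint n -> zpoint n -> R)
  (X : set (zpoint n)) (x y : zpoint n) :
  finite_diam d X -> X x -> X y -> d x y <= diam d X.
Proof. by move=> X_bounded Xx Xy; apply: (ub_le_sup X_bounded); exists x => //; exists y. Qed.

Section ReichBound.

Variables (R : realType) (T : Type) (d : T -> T -> R) (X : set T) (f : T -> T).
Variables (a b c D : R).
Hypotheses (a_ge0 : 0 <= a) (b_ge0 : 0 <= b) (c_ge0 : 0 <= c).
Hypothesis d_le_D : forall x y, X x -> X y -> d x y <= D.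
Hypothesis f_maps_X : forall x, X x -> X (f x).
Hypothesis reich : forall x y, X x -> X y ->
  d (f x) (f y) <= a * d x (f x) + b * d y (f y) + c * d x y.

Lemma reich_image_dist_le x y : X x -> X y -> d (f x) (f y) <= (a + b + c) * D.
Proof.
move=> Xx Xy; apply: (le_trans (reich Xx Xy)).
rewrite !mulrDl; apply: lerD; first apply: lerD.
all: by apply: ler_wpM2l => //; apply: d_le_D => //; exact: f_maps_X.
Qed.

End ReichBound.

Lemma sum_lt_inv3_mul_lt1 (R : realFieldType) (a b c D : R) :
  0 < D -> a < (3 * D)^-1 -> b < (3 * D)^-1 -> c < (3 * D)^-1 ->
  (a + b + c) * D < 1.
Proof.
move=> D_gt0 a_lt b_lt c_lt.
have -> : 1 = 3 * (3 * D)^-1 * D by field; rewrite gt_eqF.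
by rewrite ltr_pM2r //; lra.
Qed.

Theorem mainTheorem7 (R : realType) (n : nat) (X : set (zpoint n))
  (kappa : zpoint n -> zpoint n -> Prop) (p : lp_index R)
  (f : zpoint n -> zpoint n) (a b c : R) :
  lp_valid p ->
  finite_diam (lp_dist p) X ->
  0 < diam (lp_dist p) X ->
  (forall x, X x -> X (f x)) ->
  0 < a -> a < (3 * diam (lp_dist p) X)^-1 ->
  0 < b -> b < (3 * diam (lp_dist p) X)^-1 ->
  0 < c -> c < (3 * diam (lp_dist p) X)^-1 ->
  (forall x y, X x -> X y ->
     lp_dist p (f x) (f y) <=
       a * lp_dist p x (f x) + b * lp_dist p y (f y) + c * lp_dist p x y) ->
  forall x y, X x -> X y -> f x = f y.
Proof.
move=> p_valid X_bounded diam_gt0 f_maps_X a_gt0 a_lt b_gt0 b_lt c_gt0 c_lt reich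
  x y Xx Xy.
have image_dist_lt1 : lp_dist p (f x) (f y) < 1.
  apply: le_lt_trans (sum_lt_inv3_mul_lt1 diam_gt0 a_lt b_lt c_lt).
  apply: (reich_image_dist_le (ltW a_gt0) (ltW b_gt0) (ltW c_gt0) _ f_maps_X reich Xx Xy).
  by move=> u v; exact: dist_le_diam.
apply: contrapT => /(lp_dist_ge1 p_valid).
by rewrite leNgt image_dist_lt1.
Qed.
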